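(* Let $0<q<1$ and $p\ge1$. On the spin chain with sites $-p+\tfrac12,\dots,p-\tfrac12$, consider the probability measure on $p$-element sets of down-spin positions $y_1>y_2>\dots>y_p$ given by $$\mathbb P(y_1,\dots,y_p)=\frac{q^{2\sum_{i=1}^p y_i}}{\sum_{y'_1>\dots>y'_p}q^{2\sum_i y'_i}}$$ (the squared amplitudes of the normalized ground state $\sum q^{\sum_i y_i}\Omega(y_1,\dots,y_p)$ of the half-filled sector). For $1\le l\le p$ and $0\le\delta\le p$ let $P(l,\delta)$ be the probability that $y_l=\delta-l+\tfrac12$. Then $$P(l,\delta)=q^{2l\delta}\,\frac{\begin{bmatrix}p+\delta-l\\ \delta\end{bmatrix}_{q^2}\begin{bmatrix}p-\delta+l-1\\ l-1\end{bmatrix}_{q^2}}{\begin{bmatrix}2p\\ p\end{bmatrix}_{q^2}},$$ and, for fixed $l\ge1,\delta\ge0$, as $p\to\infty$, $$P(l,\delta)\to q^{2l\delta}\frac{(q^2;q^2)_\infty}{(q^2;q^2)_{l-1}(q^2;q^2)_\delta}.$$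
   Context: $\begin{bmatrix}n\\k\end{bmatrix}_{q^2}$ denotes the Gaussian binomial coefficient in base $q^2$ (zero if $k<0$ or $k>n$), and $(a;q^2)_k=\prod_{j=0}^{k-1}(1-aq^{2j})$, $(a;q^2)_\infty=\prod_{j\ge0}(1-aq^{2j})$. *)

From HB Require Import structures.
From mathcomp Require Import all_boot all_order all_algebra.
From mathcomp Require Import all_classical all_reals all_analysis.
Set Implicit Arguments. Unset Strict Implicit. Unset Printing Implicit Defensive.
Import Order.TTheory GRing.Theory Num.Theory numFieldNormedType.Exports.
Local Open Scope ring_scope.

Definition qpoch {R : comNzRingType} (a x : R) (k : nat) : R :=
  \prod_(j < k) (1 - a * x ^+ j).

Definition qpoch_inf {R : realType} (a x : R) : R :=
  limn (fun k : nat => (qpoch a x k : R^o)).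

Definition qbinom {R : fieldType} (x : R) (n k : nat) : R :=
  if (k <= n)%N then qpoch x x n / (qpoch x x k * qpoch x x (n - k))
  else 0.

(* Sites of the chain of length 2p: site i : 'I_(2p) sits at position
   i - p + 1/2, so positions run over -p+1/2, ..., p-1/2. *)
Definition site_pos {R : fieldType} (p i : nat) : R := i%:R - p%:R + 2^-1.

(* 2 * (sum of positions of the down spins in A), an integer. *)
Definition twice_pos_sum (p : nat) (A : {set 'I_(2 * p)}) : int :=
  \sum_(i in A) ((2 * i)%:Z - (2 * p)%:Z + 1).

Definition weight {R : fieldType} (q : R) (p : nat) (A : {set 'I_(2 * p)}) : R :=
  q ^ twice_pos_sum A.

Definition sorted_sites (p : nat) (A : {set 'I_(2 * p)}) : seq nat :=
  sort (fun a b => b <= a)%N [seq val i | i <- enum A].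

Definition y_pos {R : fieldType} (p : nat) (A : {set 'I_(2 * p)}) (l : nat) : R :=
  site_pos p (nth 0%N (sorted_sites A) l.-1).

Definition Pld {R : realType} (q : R) (p l delta : nat) : R :=
  (\sum_(A : {set 'I_(2 * p)} | (#|A| == p) && (y_pos (R:=R) A l == delta%:R - l%:R + 2^-1))
      weight q A)
  / (\sum_(A : {set 'I_(2 * p)} | #|A| == p) weight q A).

From mathcomp Require Import all_classical all_reals all_analysis.
(* After the analysis library, so that finset's [subsetP], [set0], ... shadow their
   classical_sets homonyms. *)
From mathcomp Require Import all_boot all_order all_algebra.
From mathcomp Require Import ring lra zify.
Set Implicit Arguments.
Unset Strict Implicit.
Unset Printing Implicit Defensive.
Import Order.TTheory GRing.Theory Num.Theory numFieldNormedType.Exports.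
Local Open Scope ring_scope.

(* Number the sites 0, ..., 2p-1, so that site i sits at y = i - p + 1/2 and, with x = q^2,
   the weight q^(2 sum y) of a configuration A is x^(sum of A) up to a factor depending only
   on p.  The event y_l = delta - l + 1/2 says that site m = p + delta - l is occupied, with
   l - 1 occupied sites above m and p - l below.  Summing x^(sum of A) over such A factors
   into two elementary symmetric functions of consecutive powers of x, and
   e_k(x^a, ..., x^(b-1)) = x^(k a + C(k,2)) [b-a, k]_x by q-Pascal; this gives the exact
   formula.  In terms of Pochhammer symbols, P(l, delta) is a constant times (x;x)_p
   times three ratios (x;x)_n / (x;x)_k (one of them inverted) with n >= k >= p - c;
   such a ratio lies between 1 - x^k / (1 - x) and 1, so it tends to 1. *)

Lemma qpochS (R : comNzRingType) (a x : R) n :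
  qpoch a x n.+1 = qpoch a x n * (1 - a * x ^+ n).
Proof. by rewrite /qpoch big_ord_recr. Qed.

Lemma qpoch0 (R : comNzRingType) (a x : R) : qpoch a x 0 = 1.
Proof. by rewrite /qpoch big_ord0. Qed.

Lemma qpochD (R : comNzRingType) (a x : R) m n :
  qpoch a x (m + n) = qpoch a x m * \prod_(i < n) (1 - a * x ^+ (m + i)).
Proof. by rewrite /qpoch big_split_ord. Qed.

Lemma qbinomE (R : fieldType) (x : R) n k : (k <= n)%N ->
  qbinom x n k = qpoch x x n / (qpoch x x k * qpoch x x (n - k)).
Proof. by rewrite /qbinom => ->. Qed.

Lemma qbinom_gtn (R : fieldType) (x : R) n k : (n < k)%N -> qbinom x n k = 0.
Proof. by rewrite /qbinom ltnNge => /negbTE ->. Qed.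

Lemma qbinom_sym (R : fieldType) (x : R) n k : (k <= n)%N ->
  qbinom x n k = qbinom x n (n - k).
Proof. by move=> kn; rewrite !qbinomE ?leq_subr // subKn // [_ * qpoch _ _ k]mulrC. Qed.

Section QBinomial.
Variables (R : realFieldType) (x : R).
Hypotheses (x_gt0 : 0 < x) (x_lt1 : x < 1).

Lemma qpoch_factor_gt0 n : 0 < 1 - x * x ^+ n.
Proof. by rewrite subr_gt0 -exprS exprn_ilt1 // ltW. Qed.

Lemma qpoch_gt0 n : 0 < qpoch x x n.
Proof.
by elim: n => [|n IHn]; rewrite ?qpoch0 // qpochS mulr_gt0 ?qpoch_factor_gt0.
Qed.

Lemma qbinom_gt0 n k : (k <= n)%N -> 0 < qbinom x n k.
Proof. by move=> kn; rewrite qbinomE // divr_gt0 ?mulr_gt0 ?qpoch_gt0. Qed.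

Lemma qbinomn0 n : qbinom x n 0 = 1.
Proof. by rewrite qbinomE // qpoch0 mul1r subn0 divff // gt_eqF ?qpoch_gt0. Qed.

Lemma qbinomnn n : qbinom x n n = 1.
Proof. by rewrite qbinom_sym // subnn qbinomn0. Qed.

Lemma qbinom_pascal n k :
  qbinom x n.+1 k.+1 = qbinom x n k.+1 + x ^+ (n - k) * qbinom x n k.
Proof.
have [kn|] := ltnP k n; last first.
  rewrite leq_eqVlt => /orP[/eqP->|nk]; last by rewrite !qbinom_gtn ?mulr0 ?addr0 // ltnW.
  by rewrite !qbinomnn qbinom_gtn // subnn add0r mul1r.
have [d ->] : exists d, n = (k + d).+1 by exists (n - k.+1)%N; lia.
rewrite !qbinomE; [|lia..].
have -> : ((k + d).+2 - k.+1 = d.+1)%N by lia.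
have -> : ((k + d).+1 - k.+1 = d)%N by lia.
have -> : ((k + d).+1 - k = d.+1)%N by lia.
rewrite !qpochS.
rewrite [x ^+ (k + d).+1]exprS exprD [x ^+ d.+1]exprS.
by field; rewrite !gt_eqF ?qpoch_gt0 ?qpoch_factor_gt0.
Qed.

End QBinomial.


Lemma subsetU1_notin (T : finType) (b : T) (A S : {set T}) : b \notin S ->
  b \notin A -> (A \subset b |: S) = (A \subset S).
Proof. by move=> bS bA; rewrite -[in RHS](setU1K bS) subsetD1 bA andbT. Qed.

Lemma sum_subsetU1 (R : nmodType) (T : finType) (b : T) (S : {set T})
    (P : pred {set T}) (F : {set T} -> R) : b \notin S ->
  \sum_(A : {set T} | (A \subset b |: S) && P A) F A =
  \sum_(A : {set T} | (A \subset S) && P A) F A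
  + \sum_(A : {set T} | (A \subset S) && P (b |: A)) F (b |: A).
Proof.
move=> bS; rewrite (bigID (fun A : {set T} => b \in A)) /= addrC; congr (_ + _).
  apply: eq_bigl => A; have [bA|bA] /= := boolP (b \in A); last first.
    by rewrite andbT subsetU1_notin.
  by rewrite andbF; symmetry; apply: contraNF bS => /andP[/subsetP/(_ b bA)].
rewrite (reindex_onto (fun A => b |: A) (fun A => A :\ b)) /=; last first.
  by move=> A /andP[_ bA]; rewrite setD1K.
apply: eq_bigl => A; rewrite setU11 andbT.
have [bA|bA] := boolP (b \in A); last first.
  by rewrite setU1K // eqxx andbT subUset sub1set setU11 subsetU1_notin.
have -> : ((b |: A) :\ b == A) = false by apply: contraTF bA => /eqP <-; rewrite setD11.
by rewrite andbF; symmetry; apply: contraNF bS => /andP[/subsetP/(_ b bA)].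
Qed.

Lemma sum_subsetU (R : nmodType) (T : finType) (L U : {set T})
    (P Q : pred {set T}) (F : {set T} -> R) : [disjoint L & U] ->
  \sum_(A : {set T} | (A \subset L :|: U) && P (A :&: L) && Q (A :&: U)) F A =
  \sum_(B : {set T} | (B \subset L) && P B)
    \sum_(C : {set T} | (C \subset U) && Q C) F (B :|: C).
Proof.
move=> dLU; rewrite pair_big /=.
rewrite (reindex_onto (fun BC => BC.1 :|: BC.2) (fun A => (A :&: L, A :&: U))) /=;
  last by move=> A /andP[/andP[sA _] _]; rewrite -setIUr; apply/setIidPl.
apply: eq_bigl => -[B C] /=.
have [/andP[sBL sCU]|nBC] := boolP ((B \subset L) && (C \subset U)).
  have eL : (B :|: C) :&: L = B.
    rewrite setIUl (setIidPl sBL) (disjoint_setI0 (disjointWl sCU _)) ?setU0 //.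
    by rewrite disjoint_sym.
  have eU : (B :|: C) :&: U = C.
    by rewrite setIUl (setIidPl sCU) (disjoint_setI0 (disjointWl sBL dLU)) set0U.
  by rewrite eL eU setUSS // eqxx sBL sCU /= andbT.
have -> : (((B :|: C) :&: L, (B :|: C) :&: U) == (B, C)) = false.
  by apply: contraNF nBC; rewrite xpair_eqE => /andP[/eqP <- /eqP <-]; rewrite !subsetIr.
by rewrite andbF andbACA (negbTE nBC).
Qed.

Section PowerSums.
Variables (R : comNzRingType) (x : R) (N : nat).

Definition powsum (A : {set 'I_N}) : R := x ^+ (\sum_(i in A) i).

Definition ord_range a b : {set 'I_N} := [set i : 'I_N | a <= i < b]%N.

Definition esym_range a b k : R :=
  \sum_(A : {set 'I_N} | (A \subset ord_range a b) && (#|A| == k)) powsum A.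

Lemma powsumU (A B : {set 'I_N}) :
  [disjoint A & B] -> powsum (A :|: B) = powsum A * powsum B.
Proof.
move=> dAB; rewrite /powsum -exprD (eq_bigl [predU A & B]) ?bigU // => i.
by rewrite !inE.
Qed.

Lemma powsumU1 (i : 'I_N) (A : {set 'I_N}) :
  i \notin A -> powsum (i |: A) = x ^+ i * powsum A.
Proof. by move=> iA; rewrite /powsum big_setU1 // exprD. Qed.

Lemma esym_range0 a b : esym_range a b 0 = 1.
Proof.
rewrite /esym_range (eq_bigl (pred1 set0)) ?big_pred1_eq /powsum ?big_set0 // => A /=.
by rewrite cards_eq0 andbC; case: eqP => // ->; rewrite sub0set.
Qed.

Lemma esym_range_nil a k : esym_range a a k.+1 = 0.
Proof.
rewrite /esym_range; have -> : ord_range a a = set0 by apply/setP => i; rewrite !inE; lia.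
by rewrite big_pred0 // => A; rewrite subset0; case: eqP => // ->; rewrite cards0.
Qed.

Lemma esym_rangeS a b k : (a <= b < N)%N ->
  esym_range a b.+1 k.+1 = esym_range a b k.+1 + x ^+ b * esym_range a b k.
Proof.
case/andP=> ab bN; set b' := Ordinal bN.
have b'S : b' \notin ord_range a b by rewrite inE /=; lia.
have b'A (A : {set 'I_N}) : A \subset ord_range a b -> b' \notin A.
  by move=> sA; apply: contra b'S => /(subsetP sA).
rewrite /esym_range.
have -> : ord_range a b.+1 = b' |: ord_range a b.
  by apply/setP => i; rewrite !inE -val_eqE /=; lia.
rewrite sum_subsetU1 // mulr_sumr; congr (_ + _).
apply: eq_big => A; first by apply: andb_id2l => /b'A bA; rewrite cardsU1 bA.
by case/andP=> /b'A bA _; rewrite powsumU1.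
Qed.

Lemma sum_powsum_pivot (m : 'I_N) j r :
  \sum_(A : {set 'I_N} | (#|A| == (j + r).+1) && (m \in A)
                         && (#|[set i in A | m < i]%N| == r)) powsum A
  = x ^+ m * (esym_range 0 m j * esym_range m.+1 N r).
Proof.
set L := ord_range 0 m; set U := ord_range m.+1 N.
have dLU : [disjoint L & U].
  by rewrite -setI_eq0; apply/eqP/setP => i; rewrite !inE; lia.
have LU : L :|: U = [set~ m].
  by apply/setP => i; rewrite !inE -val_eqE /=; have := ltn_ord i; lia.
have above (A : {set 'I_N}) : [set i in A | m < i]%N = A :&: U.
  by apply/setP => i; rewrite !inE (ltn_ord i) andbT.
have cardLU (A : {set 'I_N}) : A \subset L :|: U -> #|A| = (#|A :&: L| + #|A :&: U|)%N.
  move=> sA; rewrite -[in LHS](setIidPl sA) setIUr -cardsUI.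
  by rewrite setIACA (disjoint_setI0 dLU) setI0 cards0 addn0.
transitivity (\sum_(A : {set 'I_N} | (A \subset m |: (L :|: U))
    && [&& #|A| == (j + r).+1, m \in A & #|A :&: U| == r]) powsum A).
  by apply: eq_bigl => A; rewrite LU setUCr subsetT above /= andbA.
rewrite (@sum_subsetU1 _ _ m _
    (fun A => [&& #|A| == (j + r).+1, m \in A & #|A :&: U| == r])); last first.
  by rewrite LU !inE eqxx.
rewrite big_pred0 ?add0r; last first.
  by move=> A; rewrite LU subsetC sub1set inE; case: (m \in A); rewrite /= ?andbF.
transitivity (x ^+ m * \sum_(A : {set 'I_N} | (A \subset L :|: U)
    && (#|A :&: L| == j) && (#|A :&: U| == r)) powsum A).
  have mA (A : {set 'I_N}) : A \subset L :|: U -> m \notin A.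
    by rewrite LU subsetC sub1set inE.
  rewrite mulr_sumr; apply: eq_big => A; last by case/andP=> /mA mA' _; rewrite powsumU1.
  rewrite -andbA; apply: andb_id2l => sA.
  have -> : (m |: A) :&: U = A :&: U.
    by apply/setP => i; rewrite !inE -val_eqE /=; case: (i \in A); lia.
  rewrite cardsU1 (mA _ sA) add1n eqSS (cardLU _ sA) setU11.
  by case: (#|A :&: U| =P r) => [->|]; rewrite ?andbF // eqn_add2r.
congr (_ * _).
rewrite (@sum_subsetU _ _ L U (fun B => #|B| == j) (fun C => #|C| == r)) //.
rewrite /esym_range mulr_suml; apply: eq_bigr => B /andP[sB _].
rewrite mulr_sumr; apply: eq_bigr => C /andP[sC _].
by rewrite powsumU // (disjointW sB sC dLU).
Qed.

End PowerSums.

Lemma esym_rangeE (R : realFieldType) (x : R) N a b k :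
  0 < x -> x < 1 -> (a <= b <= N)%N ->
  esym_range x N a b k = x ^+ (k * a + 'C(k, 2)) * qbinom x (b - a) k.
Proof.
move=> x_gt0 x_lt1 /andP[ab bN]; rewrite -(subnKC ab) addKn in bN *.
elim: (b - a)%N bN k => [|d IHd] adN [|k].
- by rewrite esym_range0 qbinomn0 // mulr1.
- by rewrite addn0 esym_range_nil qbinom_gtn ?mulr0.
- by rewrite esym_range0 qbinomn0 // mulr1.
rewrite addnS esym_rangeS; last by rewrite leq_addr -addnS.
rewrite !IHd ?(leq_trans _ adN) ?addnS // qbinom_pascal // mulrDr; congr (_ + _).
have [kd|dk] := leqP k d; last by rewrite qbinom_gtn ?mulr0.
by rewrite !mulrA -!exprD binS bin1; congr (_ ^+ _ * _); lia.
Qed.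

Lemma count_enum_set (T : finType) (A : {set T}) (P : pred T) :
  count P (enum A) = #|[set i in A | P i]|.
Proof.
rewrite -size_filter -(card_uniqP (filter_uniq _ (enum_uniq (mem A)))).
by apply: eq_card => i; rewrite mem_filter mem_enum !inE andbC.
Qed.

Lemma count_gt_nth (s : seq nat) i : uniq s -> sorted geq s -> (i < size s)%N ->
  count (fun y => nth 0 s i < y)%N s = i.
Proof.
move=> s_uniq s_sorted lt_i_s.
have geq_trans : transitive geq by move=> a b c /= ba cb; apply: leq_trans cb ba.
rewrite -(cat_take_drop i s) in s_uniq s_sorted.
move: s_uniq s_sorted; rewrite cat_uniq sorted_pairwise // pairwise_cat.
move=> /and3P[_ nth_notin_take _] /and3P[/allrelP above_nth _].
rewrite (drop_nth 0 lt_i_s) /= => /andP[/allP below_nth _].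
rewrite -[s in count _ s](cat_take_drop i) count_cat (drop_nth 0 lt_i_s) /= ltnn add0n.
rewrite [count _ (drop _ _)](@eq_in_count _ _ pred0) ?count_pred0 ?addn0; last first.
  by move=> y /below_nth /=; rewrite leqNgt => /negbTE.
rewrite -[RHS](size_takel (ltnW lt_i_s)); apply/eqP; rewrite -all_count.
apply/allP => y y_take; have nth_drop : nth 0 s i \in drop i s.
  by rewrite (drop_nth 0 lt_i_s) mem_head.
have /= le_nth_y := above_nth y _ y_take nth_drop.
rewrite ltn_neqAle le_nth_y andbT; apply: contraNneq nth_notin_take => e.
by apply/hasP; exists y; rewrite // -e.
Qed.

Section SortedSites.
Variables (p : nat) (A : {set 'I_(2 * p)}).

Lemma sorted_sites_uniq : uniq (sorted_sites A).
Proof. by rewrite sort_uniq (map_inj_uniq val_inj) enum_uniq. Qed.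

Lemma sorted_sites_sorted : sorted geq (sorted_sites A).
Proof. by apply: sort_sorted => a b; apply: leq_total. Qed.

Lemma size_sorted_sites : size (sorted_sites A) = #|A|.
Proof. by rewrite size_sort size_map cardE. Qed.

Lemma mem_sorted_sites (m : 'I_(2 * p)) : ((m : nat) \in sorted_sites A) = (m \in A).
Proof. by rewrite mem_sort (mem_map val_inj) mem_enum. Qed.

Lemma count_sorted_sites (m : nat) :
  count (fun y => m < y)%N (sorted_sites A) = #|[set i in A | m < i]%N|.
Proof. by rewrite count_sort count_map count_enum_set. Qed.

Lemma nth_sorted_sitesP (m : 'I_(2 * p)) k : (k < #|A|)%N ->
  (nth 0%N (sorted_sites A) k == m) = (m \in A) && (#|[set i in A | m < i]%N| == k).
Proof.
rewrite -size_sorted_sites => lt_k_A; apply/eqP/andP => [e|[mA /eqP <-]].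
  rewrite -mem_sorted_sites -count_sorted_sites -e mem_nth //.
  by rewrite count_gt_nth ?sorted_sites_uniq ?sorted_sites_sorted.
rewrite -mem_sorted_sites -index_mem in mA.
have := count_gt_nth sorted_sites_uniq sorted_sites_sorted mA.
by rewrite nth_index -?index_mem // count_sorted_sites => ->; rewrite nth_index -?index_mem.
Qed.

End SortedSites.

Lemma y_posE (R : realFieldType) p l d (A : {set 'I_(2 * p)}) (m : 'I_(2 * p)) :
  (1 <= l <= p)%N -> #|A| = p -> m = (p + d - l)%N :> nat ->
  (y_pos (R := R) A l == d%:R - l%:R + 2^-1)
  = (m \in A) && (#|[set i in A | m < i]%N| == l.-1).
Proof.
move=> l_range cardA val_m; rewrite /y_pos /site_pos -nth_sorted_sitesP; last lia.
move: (nth _ _ _) => n; rewrite (inj_eq (addIr _)).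
have -> : (n%:R - p%:R == d%:R - l%:R :> R) = (n + l == d + p)%N.
  by rewrite -(eqr_nat R) !natrD; apply/eqP/eqP => ?; lra.
by rewrite val_m; apply/eqP/eqP; lia.
Qed.

Lemma weight_powsum (R : fieldType) (q : R) p (A : {set 'I_(2 * p)}) : q != 0 ->
  weight q A = powsum (q ^+ 2) A / q ^+ (#|A| * (2 * p - 1)).
Proof.
move=> q_neq0; rewrite /weight.
have -> : twice_pos_sum A = (2 * \sum_(i in A) i)%N%:Z - (#|A| * (2 * p - 1))%N%:Z.
  rewrite /twice_pos_sum big_distrr -sum1_card big_distrl /=.
  rewrite !(big_morph Posz PoszD (erefl _)) -sumrB.
  by apply: eq_bigr => i _; rewrite mul1n; have := ltn_ord i; lia.
by rewrite expfzDr // exprnP -exprnN /powsum -exprM.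
Qed.

Lemma bin2D m n : 'C(m + n, 2) = ('C(m, 2) + 'C(n, 2) + m * n)%N.
Proof.
elim: n => [|n IHn]; first by rewrite addn0 bin0n muln0 !addn0.
by rewrite addnS !binS !bin1 IHn; lia.
Qed.

Lemma pivot_exponentE p l d : (1 <= l <= p)%N ->
  ((p + d - l) + 'C(p - l, 2) + ((l - 1) * (p + d - l).+1 + 'C(l - 1, 2))
   = l * d + 'C(p, 2))%N.
Proof.
move=> l_range; set j := (p - l)%N; set r := (l - 1)%N.
have -> : 'C(p, 2) = 'C(j + r.+1, 2) by congr 'C(_, 2); lia.
have -> : (p + d - l = j + d)%N by lia.
have -> : l = r.+1 by lia.
rewrite bin2D binS bin1; nia.
Qed.

Section ExactFormula.
Variables (R : realFieldType) (q : R).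
Hypotheses (q_gt0 : 0 < q) (q_lt1 : q < 1).
Let x := q ^+ 2.
Let x_gt0 : 0 < x. Proof. by rewrite exprn_gt0. Qed.
Let x_lt1 : x < 1. Proof. by rewrite exprn_ilt1 // ltW. Qed.
Let q_neq0 : q != 0. Proof. by rewrite gt_eqF. Qed.

Lemma sum_weight_card p :
  \sum_(A : {set 'I_(2 * p)} | #|A| == p) weight q A
  = x ^+ 'C(p, 2) * qbinom x (2 * p) p / q ^+ (p * (2 * p - 1)).
Proof.
have -> : \sum_(A : {set 'I_(2 * p)} | #|A| == p) weight q A
        = esym_range x (2 * p) 0 (2 * p) p / q ^+ (p * (2 * p - 1)).
  rewrite /esym_range mulr_suml; apply: eq_big => [A|A /eqP cardA].
    by rewrite andb_idl // => _; apply/subsetP => i _; rewrite inE ltn_ord.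
  by rewrite weight_powsum // cardA.
by rewrite esym_rangeE // ?leq0n ?leqnn // muln0 add0n subn0.
Qed.

Lemma sum_weight_y_pos p l d : (1 <= l <= p)%N -> (d <= p)%N ->
  \sum_(A : {set 'I_(2 * p)} | (#|A| == p) && (y_pos (R := R) A l == d%:R - l%:R + 2^-1))
    weight q A
  = q ^+ (2 * l * d) * x ^+ 'C(p, 2)
    * (qbinom x (p + d - l) d * qbinom x (p - d + l - 1) (l - 1))
    / q ^+ (p * (2 * p - 1)).
Proof.
move=> l_range d_le_p; have m_lt : (p + d - l < 2 * p)%N by lia.
pose m := Ordinal m_lt.
transitivity ((\sum_(A : {set 'I_(2 * p)} | (#|A| == (p - l + (l - 1)).+1)%N && (m \in A)
    && (#|[set i in A | m < i]%N| == l - 1)%N) powsum x A) / q ^+ (p * (2 * p - 1))).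
  rewrite mulr_suml; have -> : ((p - l + (l - 1)).+1 = p)%N by lia.
  apply: eq_big => [A|A /andP[/eqP cardA _]]; last by rewrite weight_powsum // cardA.
  rewrite -andbA; apply: andb_id2l => /eqP cardA.
  by rewrite (y_posE R (m := m) l_range cardA) ?subn1.
rewrite sum_powsum_pivot !esym_rangeE //=; [|lia..].
rewrite muln0 add0n subn0 qbinom_sym; last lia.
have -> : (p + d - l - (p - l) = d)%N by lia.
have -> : (2 * p - (p + d - l).+1 = p - d + l - 1)%N by lia.
have -> : q ^+ (2 * l * d) = x ^+ (l * d) by rewrite -exprM mulnA.
by rewrite -exprD -(pivot_exponentE d l_range) !exprD; congr (_ / _); ring.
Qed.

End ExactFormula.

Lemma Pld_formula (R : realType) (q : R) p l d : 0 < q -> q < 1 ->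
  (1 <= l <= p)%N -> (d <= p)%N ->
  Pld q p l d = q ^+ (2 * l * d) *
    (qbinom (q ^+ 2) (p + d - l) d * qbinom (q ^+ 2) (p - d + l - 1) (l - 1))
    / qbinom (q ^+ 2) (2 * p) p.
Proof.
move=> q_gt0 q_lt1 l_range d_le_p.
rewrite /Pld sum_weight_y_pos // sum_weight_card //.
have : 0 < qbinom (q ^+ 2) (2 * p) p.
  by rewrite qbinom_gt0 ?exprn_gt0 ?exprn_ilt1 ?ltW // leq_pmull.
by move=> /gt_eqF qbin_neq0; field; rewrite qbin_neq0 !expf_neq0 ?gt_eqF.
Qed.

Lemma prodr_1B_ge (R : realDomainType) n (u : nat -> R) :
  (forall i, 0 <= u i <= 1) -> 1 - \sum_(i < n) u i <= \prod_(i < n) (1 - u i).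
Proof.
move=> u01; elim: n => [|n IHn]; first by rewrite big_ord0 big_ord0 subr0.
rewrite !big_ord_recr /=; have /andP[u_ge0 u_le1] := u01 n.
have S_ge0 : 0 <= \sum_(i < n) u i by apply: sumr_ge0 => i _; case/andP: (u01 i).
have : (1 - \sum_(i < n) u i) * (1 - u n) <= (\prod_(i < n) (1 - u i)) * (1 - u n).
  by rewrite ler_wpM2r // subr_ge0.
nra.
Qed.

Local Open Scope classical_set_scope.
Local Open Scope ring_scope.

Section QPochhammerLimit.
Variables (R : realType) (x : R).
Hypotheses (x_gt0 : 0 < x) (x_lt1 : x < 1).
Local Notation a := (qpoch x x).

Lemma qpoch_nonincreasing : {homo a : n m / (n <= m)%N >-> m <= n}.
Proof.
move=> n m /subnKC <-; rewrite qpochD ler_piMr ?(ltW (qpoch_gt0 x_gt0 x_lt1 n)) //.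
apply: prodr_ile1 => i _; apply/andP; split; first exact/ltW/qpoch_factor_gt0.
by rewrite lerBlDr lerDl mulr_ge0 ?exprn_ge0 ?ltW.
Qed.

Lemma qpoch_cvg : a @ \oo --> qpoch_inf x x.
Proof.
apply: nonincreasing_is_cvgn qpoch_nonincreasing _.
by exists 0 => _ [n _ <-]; exact/ltW/qpoch_gt0.
Qed.

Lemma geom_sum_le k t : \sum_(i < t) x ^+ (k + i) <= x ^+ k / (1 - x).
Proof.
have x1_gt0 : 0 < 1 - x by rewrite subr_gt0.
rewrite ler_pdivlMr //; have -> : (\sum_(i < t) x ^+ (k + i)) * (1 - x) = x ^+ k - x ^+ (k + t).
  elim: t => [|t IHt]; first by rewrite big_ord0 mul0r addn0 subrr.
  by rewrite big_ord_recr mulrDl IHt addnS exprSr; ring.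
by rewrite lerBlDr lerDl exprn_ge0 ?ltW.
Qed.

Lemma qpoch_ratio_ge k n : (k <= n)%N -> 1 - x ^+ k / (1 - x) <= a n / a k.
Proof.
move=> /subnKC <-; rewrite qpochD mulrAC divff ?mul1r ?gt_eqF ?qpoch_gt0 //.
have u01 i : 0 <= x * x ^+ (k + i) <= 1 by rewrite -exprS exprn_ge0 ?exprn_ile1 ?ltW.
apply: le_trans (prodr_1B_ge (n - k) u01).
rewrite lerD2l lerN2 (le_trans _ (geom_sum_le k (n - k))) //.
by apply: ler_sum => i _; rewrite ler_piMl ?exprn_ge0 ?ltW.
Qed.

Lemma qpoch_ratio_le1 k n : (k <= n)%N -> a n / a k <= 1.
Proof. by move=> kn; rewrite ler_pdivrMr ?qpoch_gt0 // mul1r qpoch_nonincreasing. Qed.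

Lemma qpoch_ratio_cvg (k n : nat -> nat) c :
  (forall p, k p <= n p)%N -> (forall p, p <= k p + c)%N ->
  (fun p => a (n p) / a (k p)) @ \oo --> (1 : R).
Proof.
move=> kn pkc; set K := (x ^+ c * (1 - x))^-1.
have lower : (fun p => 1 - x ^+ p * K) @ \oo --> (1 : R).
  rewrite -[X in _ --> X]subr0 -(mul0r K).
  apply: cvgB; first exact: cvg_cst.
  by apply: cvgM; [apply: cvg_expr; rewrite ger0_norm ?ltW | exact: cvg_cst].
apply: (squeeze_cvgr _ lower (cvg_cst (1 : R))); apply: nearW => p.
rewrite qpoch_ratio_le1 // andbT (le_trans _ (qpoch_ratio_ge (kn p))) //.
rewrite lerD2l lerN2 /K invfM mulrA ler_pM2r ?invr_gt0 ?subr_gt0 //.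
by rewrite ler_pdivlMr ?exprn_gt0 // -exprD ler_wiXn2l ?ltW.
Qed.

End QPochhammerLimit.

Section Asymptotics.
Variables (R : realType) (q : R).
Hypotheses (q_gt0 : 0 < q) (q_lt1 : q < 1).
Let x := q ^+ 2.
Let x_gt0 : 0 < x. Proof. by rewrite exprn_gt0. Qed.
Let x_lt1 : x < 1. Proof. by rewrite exprn_ilt1 // ltW. Qed.
Local Notation a := (qpoch x x).

Lemma Pld_qpochE p l d : (1 <= l)%N -> (l + d <= p)%N ->
  Pld q p l d = q ^+ (2 * l * d) / (a (l - 1) * a d)
    * (a (p + d - l) / a (p - l) * (a (p - d + l - 1) / a (p - d))
       * (a p / (a (2 * p) / a p))).
Proof.
move=> l_ge1 ldp; rewrite Pld_formula //; [|lia..].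
rewrite -/x !qbinomE; [|lia..].
have -> : (p + d - l - d = p - l)%N by lia.
have -> : (p - d + l - 1 - (l - 1) = p - d)%N by lia.
have -> : (2 * p - p = p)%N by lia.
by field; rewrite !gt_eqF ?qpoch_gt0.
Qed.

Lemma Pld_cvg l d : (1 <= l)%N ->
  (fun p => Pld q p l d) @ \oo --> q ^+ (2 * l * d) * qpoch_inf x x / (a (l - 1) * a d).
Proof.
move=> l_ge1.
have ratios : (fun p => a (p + d - l) / a (p - l) * (a (p - d + l - 1) / a (p - d))
    * (a p / (a (2 * p) / a p))) @ \oo --> 1 * 1 * (qpoch_inf x x / 1).
  apply: cvgM; first apply: cvgM.
  - by apply: (qpoch_ratio_cvg x_gt0 x_lt1 (c := l)) => // p; lia.
  - by apply: (qpoch_ratio_cvg x_gt0 x_lt1 (c := d)) => // p; lia.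
  apply: cvgM; first exact: qpoch_cvg.
  by apply: cvgV; [exact: oner_neq0 | apply: (qpoch_ratio_cvg x_gt0 x_lt1 (c := 0)) => // p; lia].
rewrite !mul1r divr1 in ratios; rewrite mulrAC.
apply: cvg_trans (near_eq_cvg _) (cvgM (cvg_cst _) ratios).
by exists (l + d)%N => // p /= ldp; rewrite Pld_qpochE.
Qed.

End Asymptotics.

Theorem mainTheorem2 (R : realType) (q : R) (hq0 : 0 < q) (hq1 : q < 1) :
  (forall p l delta : nat, (1 <= l <= p)%N -> (delta <= p)%N ->
     Pld q p l delta =
       q ^+ (2 * l * delta) *
       (qbinom (q ^+ 2) (p + delta - l) delta
        * qbinom (q ^+ 2) (p - delta + l - 1) (l - 1))
       / qbinom (q ^+ 2) (2 * p) p)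
  /\
  (forall l delta : nat, (1 <= l)%N ->
     (fun p : nat => Pld q p l delta) @ \oo -->
       (q ^+ (2 * l * delta) * qpoch_inf (q ^+ 2) (q ^+ 2)
        / (qpoch (q ^+ 2) (q ^+ 2) (l - 1) * qpoch (q ^+ 2) (q ^+ 2) delta)
        : R)).
Proof. by split=> *; [exact: Pld_formula | exact: Pld_cvg]. Qed.
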